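(* For every integer $m\ge2$ and every $a\ge0$, all leading principal minors $R_l=\det\big((R_{ij})_{1\le i,j\le l}\big)$, $l=1,\dots,m$, are positive; hence $R$ is positive definite. Moreover every entry of $R^{-1}$ is strictly positive: $(R^{-1})_{ij}>0$ for all $i,j=1,\dots,m$. In particular $r_i=\sum_{j=1}^m(R^{-1})_{ij}>0$ for each $i$.
   Context: $R$ is the symmetric tridiagonal $m\times m$ matrix with $R_{ii}=2a^2+2i-1$ ($1\le i\le m$), $R_{i,i+1}=R_{i+1,i}=-(a^2+i)$ ($1\le i\le m-1$), and all other entries zero. *)

(* The statement is purely algebraic, so it is stated over an
   arbitrary real field R (covers the real numbers). *)
From HB Require Import structures.
From mathcomp Require Import all_boot all_order all_algebra.
Set Implicit Arguments. Unset Strict Implicit. Unset Printing Implicit Defensive.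
Import Order.TTheory GRing.Theory Num.Theory.
Local Open Scope ring_scope.

(* Entries of R with 0-based indices i, j (paper index = i+1):
   R_{ii} = 2a^2 + 2(i+1) - 1 = 2a^2 + (2i+1),
   R_{i,i+1} = R_{i+1,i} = -(a^2 + (i+1)). *)
Definition Rentry {F : pzRingType} (a : F) (i j : nat) : F :=
  if i == j then 2 * a ^+ 2 + (2 * i + 1)%N%:R
  else if (j == i.+1) || (i == j.+1) then - (a ^+ 2 + (minn i j).+1%:R)
  else 0.

Definition Rmat {F : pzRingType} (m : nat) (a : F) : 'M[F]_m :=
  \matrix_(i < m, j < m) Rentry a i j.

Definition lead_submx {F : pzRingType} (m : nat) (A : 'M[F]_m) (l : 'I_m)
  : 'M[F]_l.+1 :=
  mxsub (widen_ord (ltn_ord l)) (widen_ord (ltn_ord l)) A.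

Definition posdef {F : numDomainType} (m : nat) (A : 'M[F]_m) : Prop :=
  A^T = A /\ forall x : 'cV[F]_m, x != 0 -> 0 < (x^T *m A *m x) 0 0.

From HB Require Import structures.
From mathcomp Require Import all_boot all_order all_algebra.
From mathcomp Require Import ring lra zify.
Import Order.TTheory GRing.Theory Num.Theory.
Local Open Scope ring_scope.

(* R = Rmat m a is the symmetric tridiagonal matrix with, writing
   c k = a^2 + k, diagonal entries c i + c (i+1) and off-diagonal entries
   -c (i+1) (0-based indices).  The proof has three independent parts.
   1. Minors: the leading minors D k of any tridiagonal matrix satisfy a
      three-term recurrence; for R it gives
      D (k+1) - c (k+1) D k = c k (D k - c k D (k-1)) >= 0, so D k > 0.
   2. Positive definiteness: the quadratic form of R is the sum of squares
      a^2 x_0^2 + c m x_(m-1)^2 + sum_i c (i+1) (x_i - x_(i+1))^2, which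
      vanishes only at x = 0.
   3. Inverse: a matrix with nonpositive off-diagonal entries and positive
      definite form has a nonnegative inverse (test the form on the negative
      part of a solution); zeros of a nonnegative solution of R y = e_j
      propagate along the nonzero off-diagonal entries, which connect all
      indices of R, so every entry of R^-1 is positive. *)

Lemma chain_closed (n : nat) (P : nat -> Prop) :
  (forall i, (i.+1 < n)%N -> P i <-> P i.+1) ->
  forall k l, (k < n)%N -> (l < n)%N -> P k -> P l.
Proof.
move=> step.
have to_first k : (k < n)%N -> P k <-> P 0.
  elim: k => [//|k IH] hk.
  by have := step k hk; have := IH (ltnW hk); tauto.
by move=> k l hk hl; have := to_first k hk; have := to_first l hl; tauto.
Qed.

Lemma bilinear_entry (R : comPzRingType) n (u v : 'cV[R]_n) (A : 'M[R]_n) :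
  (u^T *m A *m v) 0 0 = \sum_(i < n) \sum_(j < n) u i 0 * A i j * v j 0.
Proof.
rewrite mxE exchange_big /=; apply: eq_bigr => j _.
by rewrite mxE mulr_suml; apply: eq_bigr => i _; rewrite !mxE.
Qed.

Section TridiagonalDeterminant.
Variables (R : comPzRingType) (e : nat -> nat -> R).
Hypothesis e_tridiag : forall i j, (i.+1 < j)%N || (j.+1 < i)%N -> e i j = 0.

Definition tridiag_mx k : 'M[R]_k := \matrix_(i < k, j < k) e i j.

Lemma sign_double k : (-1) ^+ (k + k)%N = 1 :> R.
Proof. by rewrite -signr_odd oddD addbb. Qed.

Lemma tridiag_minor_diag k :
  row' ord_max (col' ord_max (tridiag_mx k.+1)) = tridiag_mx k.
Proof. by apply/matrixP => i j; rewrite !mxE !lift_max. Qed.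

(* Deleting the last row and the last-but-one column leaves a matrix whose
   last column carries the single entry e k (k+1) above tridiag_mx k. *)
Lemma tridiag_minor_offdiag k :
  \det (row' ord_max (col' (widen_ord (leqnSn k.+1) ord_max) (tridiag_mx k.+2)))
  = e k k.+1 * \det (tridiag_mx k).
Proof.
rewrite (expand_det_col _ ord_max) big_ord_recr /= big1 ?add0r; last first.
  move=> i _; rewrite !mxE /= e_tridiag ?mul0r //.
  have hi := ltn_ord i; rewrite /bump leqnn.
  rewrite (_ : (k.+1 <= i)%N = false); last by lia.
  lia.
rewrite /cofactor !mxE /= /bump leqnn ltnn add0n.
rewrite (_ : (true + k)%N = k.+1) // sign_double mul1r; congr (_ * \det _).
apply/matrixP => i j; rewrite !mxE /= /bump.
have hi := ltn_ord i; have hj := ltn_ord j.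
have e1 : (k <= i)%N = false by lia.
have e2 : (k <= j)%N = false by lia.
by rewrite e1 !add0n (_ : (k < i)%N = false) ?e2 //; lia.
Qed.

Lemma det_tridiag_rec k :
  \det (tridiag_mx k.+2) = e k.+1 k.+1 * \det (tridiag_mx k.+1)
                           - e k.+1 k * e k k.+1 * \det (tridiag_mx k).
Proof.
rewrite (expand_det_row _ ord_max) big_ord_recr big_ord_recr /=.
rewrite big1 ?add0r; last first.
  by move=> j _; rewrite !mxE /= e_tridiag ?mul0r //; have := ltn_ord j; lia.
rewrite !mxE /= /cofactor /= tridiag_minor_diag tridiag_minor_offdiag.
rewrite (sign_double k.+1) addSn exprS (sign_double k); ring.
Qed.

End TridiagonalDeterminant.
Arguments tridiag_mx {R} e k.

Section ZMatrix.
Variables (R : realDomainType) (n : nat) (A : 'M[R]_n).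
Hypothesis offdiag_le0 : forall i j, i != j -> A i j <= 0.
Hypothesis form_pos : forall x : 'cV[R]_n, x != 0 -> 0 < (x^T *m A *m x) 0 0.

Lemma Zmatrix_solution_ge0 (y b : 'cV[R]_n) :
  A *m y = b -> (forall i, 0 <= b i 0) -> forall i, 0 <= y i 0.
Proof.
move=> Ayb b_ge0.
pose pos := \col_i (if y i 0 < 0 then 0 else y i 0).
pose neg := \col_i (if y i 0 < 0 then - y i 0 else 0).
have pos_ge0 i : 0 <= pos i 0.
  by rewrite mxE; case: ltP => // /ltW.
have neg_ge0 i : 0 <= neg i 0.
  by rewrite mxE; case: ltP => // /ltW; rewrite oppr_ge0.
have neg_pos i : neg i 0 * pos i 0 = 0.
  by rewrite !mxE; case: ltP; rewrite ?mulr0 ?mul0r.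
(* Since neg = pos - y and A y = b, the form of neg splits into a cross
   term with pos, which is <= 0, minus neg^T b, which is >= 0. *)
have neg_form : (neg^T *m A *m neg) 0 0 =
    \sum_i \sum_j neg i 0 * A i j * pos j 0 - \sum_i neg i 0 * b i 0.
  rewrite bilinear_entry -sumrB; apply: eq_bigr => i _.
  rewrite -Ayb [(A *m y) i 0]mxE mulr_sumr -sumrB; apply: eq_bigr => j _.
  by rewrite ![neg j 0]mxE ![pos j 0]mxE; case: (y j 0 < 0); ring.
have cross_le0 : \sum_i \sum_j neg i 0 * A i j * pos j 0 <= 0.
  apply: sumr_le0 => i _; apply: sumr_le0 => j _.
  have [<-|ij] := eqVneq i j; first by rewrite mulrAC neg_pos mul0r.
  by rewrite mulr_le0_ge0 ?mulr_ge0_le0 ?offdiag_le0.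
have rhs_ge0 : 0 <= \sum_i neg i 0 * b i 0.
  by apply: sumr_ge0 => i _; rewrite mulr_ge0.
have neg0 : neg = 0.
  apply/eqP/negPn/negP => /form_pos; rewrite neg_form ltNge subr_le0.
  by rewrite (le_trans cross_le0 rhs_ge0).
move=> i; rewrite leNgt; apply/negP => yi_lt0.
have := congr1 (fun x : 'cV[R]_n => x i 0) neg0.
by rewrite /= !mxE yi_lt0 => /eqP; rewrite oppr_eq0 lt_eqF.
Qed.

Lemma Zmatrix_solution_zero (y b : 'cV[R]_n) k :
  A *m y = b -> (forall i, 0 <= y i 0) -> (forall i, 0 <= b i 0) ->
  y k 0 = 0 -> b k 0 = 0 /\ forall l, A k l != 0 -> y l 0 = 0.
Proof.
move=> Ayb y_ge0 b_ge0 yk0.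
have terms_ge0 l : true -> 0 <= - (A k l * y l 0).
  move=> _; rewrite oppr_ge0; have [<-|kl] := eqVneq k l; first by rewrite yk0 mulr0.
  by rewrite mulr_le0_ge0 ?offdiag_le0.
have row_sum : \sum_l - (A k l * y l 0) = - b k 0 by rewrite sumrN -Ayb mxE.
have bk0 : b k 0 = 0.
  by apply/eqP; rewrite eq_le b_ge0 -oppr_ge0 -row_sum sumr_ge0.
have sum0 : \sum_l - (A k l * y l 0) = 0 by rewrite row_sum bk0 oppr0.
split=> // l Akl; have /eqP := psumr_eq0P terms_ge0 sum0 (i := l) isT.
by rewrite oppr_eq0 mulf_eq0 (negbTE Akl) => /eqP.
Qed.

End ZMatrix.
Arguments Zmatrix_solution_ge0 {R n A}.
Arguments Zmatrix_solution_zero {R n A}.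

Section MatrixR.
Variables (F : realDomainType) (a : F).

Local Notation c k := (a ^+ 2 + (k)%:R).

Lemma c_gt0 k : 0 < c k.+1.
Proof. by rewrite ltr_wpDl ?sqr_ge0 ?ltr0n. Qed.

Lemma Rentry_diag i : Rentry a i i = c i + c i.+1.
Proof. by rewrite /Rentry eqxx natrD natrM -natr1; ring. Qed.

Lemma Rentry_super i : Rentry a i i.+1 = - c i.+1.
Proof.
rewrite /Rentry (_ : (i == i.+1) = false); last by apply/eqP; lia.
by rewrite eqxx /= (minn_idPl (leqnSn i)).
Qed.

Lemma Rentry_sub i : Rentry a i.+1 i = - c i.+1.
Proof.
rewrite /Rentry (_ : (i.+1 == i) = false); last by apply/eqP; lia.
by rewrite eqxx orbT (minn_idPr (leqnSn i)).
Qed.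

Lemma Rentry_far i j : (i.+1 < j)%N || (j.+1 < i)%N -> Rentry a i j = 0.
Proof.
move=> far; rewrite /Rentry (_ : (i == j) = false); last by apply/eqP; lia.
rewrite (_ : (j == i.+1) || (i == j.+1) = false) //.
by apply/negbTE/norP; split; apply/eqP; lia.
Qed.

Lemma Rentry_sym i j : Rentry a i j = Rentry a j i.
Proof.
by rewrite /Rentry; case: (eqVneq i j) => [->|_] //; rewrite minnC orbC.
Qed.

Lemma Rentry_offdiag_le0 i j : i != j -> Rentry a i j <= 0.
Proof.
move=> ij; rewrite /Rentry (negbTE ij).
by case: ifP => _ //; rewrite oppr_le0 addr_ge0 ?sqr_ge0.
Qed.

Local Notation D k := (\det (Rmat k a)).

Lemma Rmat_tridiag k : Rmat k a = tridiag_mx (Rentry a) k.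
Proof. by []. Qed.

Lemma det_Rmat_rec k : D k.+2 = (c k.+1 + c k.+2) * D k.+1 - c k.+1 ^+ 2 * D k.
Proof.
rewrite !Rmat_tridiag (@det_tridiag_rec _ (Rentry a) Rentry_far).
by rewrite -Rentry_diag Rentry_sub Rentry_super; congr (_ - _); ring.
Qed.

(* By induction, D (k+1) - c (k+1) D k = c k (D k - c k D (k-1)) >= 0,
   so the leading minors grow and stay positive. *)
Lemma det_Rmat_gap k : c k.+1 * D k <= D k.+1 /\ 0 < D k.
Proof.
elim: k => [|k [gap pos]].
  rewrite /= det_mx00 det_mx11 mxE Rentry_diag mulr1.
  by split; [apply: ler_wpDl; rewrite ?addr_ge0 ?sqr_ge0 | exact: ltr01].
have ck := c_gt0 k.
have posS : 0 < D k.+1 by apply: lt_le_trans gap; rewrite mulr_gt0.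
split=> //; rewrite det_Rmat_rec.
have step : 0 <= c k.+1 * (D k.+1 - c k.+1 * D k)
  by apply: mulr_ge0; [exact: ltW | rewrite subr_ge0].
lra.
Qed.

Lemma det_Rmat_gt0 k : 0 < D k.
Proof. by case: (det_Rmat_gap k). Qed.

Definition Rform n (x : nat -> F) : F :=
  \sum_(i < n) \sum_(j < n) x i * Rentry a i j * x j.

Lemma Rform_sum_squares k (x : nat -> F) :
  Rform k.+1 x = a ^+ 2 * x 0%N ^+ 2 + c k.+1 * x k ^+ 2
                 + \sum_(i < k) c i.+1 * (x i - x i.+1) ^+ 2.
Proof.
elim: k => [|k IH]; first by rewrite /Rform !big_ord1 big_ord0 /= Rentry_diag; ring.
have last_col : \sum_(i < k.+1) x i * Rentry a i k.+1 * x k.+1 = - c k.+1 * x k * x k.+1.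
  rewrite big_ord_recr /= big1 ?add0r ?Rentry_super; first by ring.
  by move=> i _; rewrite Rentry_far ?mulr0 ?mul0r //; have := ltn_ord i; lia.
have last_row : \sum_(j < k.+1) x k.+1 * Rentry a k.+1 j * x j = - c k.+1 * x k * x k.+1.
  rewrite big_ord_recr /= big1 ?add0r ?Rentry_sub; first by ring.
  by move=> j _; rewrite Rentry_far ?mulr0 ?mul0r //; have := ltn_ord j; lia.
rewrite /Rform big_ord_recr /=.
under eq_bigr do rewrite big_ord_recr /=.
rewrite big_split /= -/(Rform k.+1 x) IH last_col big_ord_recr /= last_row Rentry_diag.
rewrite [in RHS]big_ord_recr /= -!natr1; ring.
Qed.

(* Hence the form is positive unless x vanishes on 0..k: if it is zero then
   x k = 0 and consecutive coordinates agree, so all of them vanish. *)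
Lemma Rform_gt0 k (x : nat -> F) i0 : (i0 < k.+1)%N -> x i0 != 0 -> 0 < Rform k.+1 x.
Proof.
move=> i0k xi0; rewrite Rform_sum_squares.
have T1 : 0 <= a ^+ 2 * x 0%N ^+ 2 by rewrite mulr_ge0 ?sqr_ge0.
have T2 : 0 <= c k.+1 * x k ^+ 2 by rewrite mulr_ge0 ?sqr_ge0 ?ltW ?c_gt0.
have T3_terms (i : 'I_k) : true -> 0 <= c i.+1 * (x i - x i.+1) ^+ 2.
  by move=> _; rewrite mulr_ge0 ?sqr_ge0 ?ltW ?c_gt0.
have T3 : 0 <= \sum_(i < k) c i.+1 * (x i - x i.+1) ^+ 2 by apply: sumr_ge0.
rewrite lt_def !addr_ge0 // andbT; apply/eqP => form0.
have xk0 : x k = 0.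
  have /eqP : c k.+1 * x k ^+ 2 = 0 by lra.
  by rewrite mulf_eq0 sqrf_eq0 gt_eqF ?c_gt0 //= => /eqP.
have steps0 : \sum_(i < k) c i.+1 * (x i - x i.+1) ^+ 2 = 0 by lra.
have x_step i : (i.+1 < k.+1)%N -> x i = 0 <-> x i.+1 = 0.
  move=> ik; have /eqP := psumr_eq0P T3_terms steps0 (i := Ordinal (ik : (i < k)%N)) isT.
  by rewrite /= mulf_eq0 sqrf_eq0 gt_eqF ?c_gt0 //= subr_eq0 => /eqP ->.
move/eqP: xi0; apply.
exact: (@chain_closed k.+1 (fun i => x i = 0) x_step k i0 (ltnSn k) i0k xk0).
Qed.

Lemma Rmat_posdef n : posdef (Rmat n a).
Proof.
split; first by apply/matrixP => i j; rewrite !mxE Rentry_sym.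
case: n => [|k] v v_neq0; first by rewrite flatmx0 eqxx in v_neq0.
have [i0 vi0] : exists i0 : 'I_k.+1, v i0 0 != 0.
  apply/existsP; move: v_neq0; apply: contraR; rewrite negb_exists => /forallP v0.
  by apply/eqP/matrixP => i j; rewrite !mxE ord1; apply/eqP; rewrite -[_ == _]negbK v0.
have := @Rform_gt0 k (fun i => v (inord i) 0) i0 (ltn_ord i0).
rewrite inord_val bilinear_entry => /(_ vi0); congr (0 < _).
by apply: eq_bigr => i _; apply: eq_bigr => j _; rewrite !inord_val mxE.
Qed.

Lemma lead_submx_Rmat m (l : 'I_m) : lead_submx (Rmat m a) l = Rmat l.+1 a.
Proof. by apply/matrixP => i j; rewrite !mxE. Qed.

End MatrixR.

Section InverseOfR.
Variables (F : realFieldType) (a : F).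

Lemma Rmat_unit n : Rmat n a \in unitmx.
Proof. by rewrite unitmxE unitfE gt_eqF ?det_Rmat_gt0. Qed.

(* Column j of the inverse solves R y = e_j.  R is a Z-matrix with positive
   definite form, so y >= 0; a zero coordinate would spread along the path
   formed by the nonzero off-diagonal entries and reach coordinate j, where
   the right-hand side is 1. *)
Lemma invmx_Rmat_gt0 n (i j : 'I_n) : 0 < invmx (Rmat n a) i j.
Proof.
case: n i j => [[]//|n] i j; set M := Rmat n.+1 a.
pose y := col j (invmx M); pose b : 'cV[F]_n.+1 := delta_mx j 0.
have My : M *m y = b by rewrite /y colE mulmxA mulmxV ?mul1mx ?Rmat_unit.
have offdiag k l : k != l -> M k l <= 0 by move=> kl; rewrite mxE Rentry_offdiag_le0.
have b_ge0 l : 0 <= b l 0 by rewrite mxE ler0n.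
have y_ge0 := Zmatrix_solution_ge0 offdiag (@Rmat_posdef _ a n.+1).2 y b My b_ge0.
have zero_spreads k := Zmatrix_solution_zero offdiag y b k My y_ge0 b_ge0.
have y_step t : (t.+1 < n.+1)%N -> y (inord t) 0 = 0 <-> y (inord t.+1) 0 = 0.
  move=> tn; split=> /zero_spreads [_]; apply;
    by rewrite mxE !inordK ?Rentry_super ?Rentry_sub ?oppr_eq0 ?gt_eqF ?c_gt0 //; lia.
have -> : invmx M i j = y i 0 by rewrite mxE.
rewrite lt_def y_ge0 andbT; apply/eqP => yi0.
have yj0 : y j 0 = 0.
  have := @chain_closed n.+1 (fun t => y (inord t) 0 = 0) y_step i j.
  by rewrite !inord_val; apply.
have [] := zero_spreads j yj0.
by rewrite mxE !eqxx => /eqP; rewrite oner_eq0.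
Qed.

End InverseOfR.

Theorem mainTheorem7 (F : realFieldType) (m : nat) (a : F) :
  (2 <= m)%N -> 0 <= a ->
  [/\ (forall l : 'I_m, 0 < \det (lead_submx (Rmat m a) l)),
      posdef (Rmat m a),
      Rmat m a \in unitmx,
      (forall i j : 'I_m, 0 < invmx (Rmat m a) i j)
    & (forall i : 'I_m, 0 < \sum_(j < m) invmx (Rmat m a) i j)].
Proof.
move=> _ _; have inv_gt0 := @invmx_Rmat_gt0 F a m; split => //.
- by move=> l; rewrite lead_submx_Rmat det_Rmat_gt0.
- exact: Rmat_posdef.
- exact: Rmat_unit.
- move=> i; apply: (lt_le_trans (inv_gt0 i i)).
  by rewrite (bigD1 i) //= lerDl; apply: sumr_ge0 => j _; apply/ltW.
Qed.
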